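(* Fix an integer $q\ge 2$. For $c\in\mathbb{R}$ let $\varphi_c(x)=\left|\frac{\sin \pi q(x+c)}{\sin\pi(x+c)}\right|$ (extended by continuity, with value $q$, where $x+c\in\mathbb{Z}$), and let $\gamma(c)$ be the Gelfond exponent defined below. Then $\gamma(c)=\gamma(1-c)$ for all $c\in[0,1]$. Moreover, for all $n\ge 1$ and all $x\in[0,1]$, $$\prod_{j=0}^{n-1}\varphi_c(q^jx)=\prod_{j=0}^{n-1}\varphi_{1-c}(q^j(1-x)).$$
   Context: For an integer $n\ge 0$, $S_q(n)$ is the sum of the digits of $n$ in base $q$, and $t_n^{(q;c)}=e^{2\pi i c S_q(n)}$. The Gelfond exponent $\gamma(c)$ is the infimum of all real $\gamma$ such that $\sup_{x\in\mathbb{R}}\left|\sum_{n=0}^{N-1}t_n^{(q;c)}e^{2\pi i n x}\right|=O(N^\gamma)$ as $N\to\infty$. *)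

From Stdlib Require Import Reals Lra Lia.
From Coquelicot Require Import Coquelicot.
Open Scope R_scope.

(* Sum of base-q digits of n (fuel n suffices since n / q < n for q >= 2). *)
Fixpoint digit_sum_aux (q fuel n : nat) : nat :=
  match fuel with
  | O => O
  | S k => (Nat.modulo n q + digit_sum_aux q k (Nat.div n q))%nat
  end.
Definition digit_sum (q n : nat) : nat := digit_sum_aux q n n.

Fixpoint sumR (n : nat) (f : nat -> R) : R :=
  match n with O => 0 | S k => sumR k f + f k end.
Fixpoint prodR (n : nat) (f : nat -> R) : R :=
  match n with O => 1 | S k => prodR k f * f k end.

(* | sum_{n<N} e^{2 pi i c S_q(n)} e^{2 pi i n x} |, the complex modulus written out. *)
Definition gelfond_sum_abs (q : nat) (c : R) (N : nat) (x : R) : R :=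
  let th k := 2 * PI * (c * INR (digit_sum q k) + INR k * x) in
  sqrt ((sumR N (fun k => cos (th k))) ^ 2 + (sumR N (fun k => sin (th k))) ^ 2).

Definition gelfond_bound (q : nat) (c g : R) : Prop :=
  exists C : R, exists N0 : nat, forall N : nat, (N0 <= N)%nat -> (1 <= N)%nat ->
    forall x : R, gelfond_sum_abs q c N x <= C * Rpower (INR N) g.

Definition gelfond_exponent (q : nat) (c : R) : Rbar :=
  Glb_Rbar (fun g => gelfond_bound q c g).

Definition phi (q : nat) (c x : R) : R :=
  if Req_EM_T (sin (PI * (x + c))) 0 then INR q
  else Rabs (sin (PI * INR q * (x + c)) / sin (PI * (x + c))).

(* Both identities come from the symmetry c -> 1 - c combined with a reflection of the
   variable.  Since S_q(n) is an integer, e^{2 pi i (1-c) S_q(n)} is the complex conjugate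
   of e^{2 pi i c S_q(n)}, so the exponential sum for 1 - c at x is the conjugate of the
   sum for c at -x: the suprema over x agree and so do the exponents.  For the products,
   |sin| is even and pi-periodic, so |sin(pi k (m - u + 1 - c))| = |sin(pi k (u + c))| for
   all naturals k, m; with k = 1 and k = q this gives phi_c(u) = phi_{1-c}(m - u), and we
   take u = q^j x, m = q^j.  Neither identity needs q >= 2, c in [0,1], n >= 1 or x in [0,1]. *)
From Stdlib Require Import Reals Lra.
From Coquelicot Require Import Coquelicot.
Open Scope R_scope.

Lemma sumR_ext n f g : (forall k, f k = g k) -> sumR n f = sumR n g.
Proof. intros H; induction n; simpl; [reflexivity | rewrite IHn, H; reflexivity]. Qed.

Lemma sumR_opp n f : sumR n (fun k => - f k) = - sumR n f.
Proof. induction n; simpl; [lra | rewrite IHn; lra]. Qed.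

Lemma prodR_ext n f g : (forall k, f k = g k) -> prodR n f = prodR n g.
Proof. intros H; induction n; simpl; [reflexivity | rewrite IHn, H; reflexivity]. Qed.

Lemma gelfond_sum_abs_one_sub q c N x :
  gelfond_sum_abs q (1 - c) N x = gelfond_sum_abs q c N (- x).
Proof.
  pose (s := fun k => 2 * PI * ((1 - c) * INR (digit_sum q k) + INR k * x)).
  pose (t := fun k => 2 * PI * (c * INR (digit_sum q k) + INR k * - x)).
  change (sqrt (sumR N (fun k => cos (s k)) ^ 2 + sumR N (fun k => sin (s k)) ^ 2) =
          sqrt (sumR N (fun k => cos (t k)) ^ 2 + sumR N (fun k => sin (t k)) ^ 2)).
  assert (angle : forall k, s k = - t k + 2 * INR (digit_sum q k) * PI).
  { intro k; unfold s, t; ring. }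
  rewrite (sumR_ext N (fun k => cos (s k)) (fun k => cos (t k))).
  2: { intro k; rewrite angle, cos_period, cos_neg; reflexivity. }
  rewrite (sumR_ext N (fun k => sin (s k)) (fun k => - sin (t k))).
  2: { intro k; rewrite angle, sin_period, sin_neg; reflexivity. }
  rewrite sumR_opp; f_equal; ring.
Qed.

Lemma gelfond_bound_one_sub q c g : gelfond_bound q c g -> gelfond_bound q (1 - c) g.
Proof.
  intros [C [N0 bound]]; exists C, N0; intros N hN0 hN1 x.
  rewrite gelfond_sum_abs_one_sub; apply bound; assumption.
Qed.

Lemma gelfond_exponent_one_sub q c : gelfond_exponent q (1 - c) = gelfond_exponent q c.
Proof.
  apply Glb_Rbar_eqset; intro g; split.
  - intro h; replace c with (1 - (1 - c)) by ring; apply gelfond_bound_one_sub, h.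
  - apply gelfond_bound_one_sub.
Qed.

Lemma Rabs_sin_nat_PI_minus (m : nat) a : Rabs (sin (INR m * PI - a)) = Rabs (sin a).
Proof.
  induction m as [| m IH].
  - simpl; replace (0 * PI - a) with (- a) by ring; rewrite sin_neg, Rabs_Ropp; reflexivity.
  - rewrite S_INR; replace ((INR m + 1) * PI - a) with (INR m * PI - a + PI) by ring.
    rewrite neg_sin, Rabs_Ropp; exact IH.
Qed.

Lemma phi_one_sub_reflect q c (m : nat) u : phi q (1 - c) (INR m - u) = phi q c u.
Proof.
  unfold phi.
  replace (PI * (INR m - u + (1 - c))) with (INR (S m) * PI - PI * (u + c))
    by (rewrite S_INR; ring).
  replace (PI * INR q * (INR m - u + (1 - c)))
    with (INR (q * S m) * PI - PI * INR q * (u + c)) by (rewrite mult_INR, S_INR; ring).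
  pose proof (Rabs_sin_nat_PI_minus (S m) (PI * (u + c))) as den.
  pose proof (Rabs_sin_nat_PI_minus (q * S m) (PI * INR q * (u + c))) as num.
  destruct (Req_EM_T (sin (INR (S m) * PI - PI * (u + c))) 0) as [z' | nz'];
  destruct (Req_EM_T (sin (PI * (u + c))) 0) as [z | nz]; try reflexivity.
  - rewrite z', Rabs_R0 in den; symmetry in den; apply Rabs_eq_0 in den; contradiction.
  - rewrite z, Rabs_R0 in den; apply Rabs_eq_0 in den; contradiction.
  - rewrite !Rabs_div by assumption; rewrite den, num; reflexivity.
Qed.

Lemma prodR_phi_one_sub_reflect q c n x :
  prodR n (fun j => phi q (1 - c) (INR q ^ j * (1 - x))) =
  prodR n (fun j => phi q c (INR q ^ j * x)).
Proof.
  apply prodR_ext; intro j.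
  replace (INR q ^ j * (1 - x)) with (INR (q ^ j) - INR q ^ j * x)
    by (rewrite pow_INR; ring).
  apply phi_one_sub_reflect.
Qed.

Theorem proposition3p1 (q : nat) (hq : (2 <= q)%nat) :
  forall c : R, 0 <= c <= 1 ->
    gelfond_exponent q c = gelfond_exponent q (1 - c) /\
    (forall (n : nat) (x : R), (1 <= n)%nat -> 0 <= x <= 1 ->
       prodR n (fun j => phi q c (INR q ^ j * x)) =
       prodR n (fun j => phi q (1 - c) (INR q ^ j * (1 - x)))).
Proof.
  intros c _; split.
  - symmetry; apply gelfond_exponent_one_sub.
  - intros n x _ _; symmetry; apply prodR_phi_one_sub_reflect.
Qed.
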